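(* Let $\rho>0$ and assume $\Gamma(0)<\Gamma(1)$ and $1+\rho\ln\mu(0)>0$. Then for every $\rho$-admissible scaling $n\mapsto L_n$, \[ \lim_{n\to\infty}\mathbb{E}[I^{(0)}_n(L_n)]=\begin{cases}\infty&\text{if } 1+\rho\ln\Gamma(0)<0,\\ 0&\text{if } 1+\rho\ln\Gamma(0)>0.\end{cases} \]
   Context: Homogeneous binary MAG model. Fix $\mu(0),\mu(1)\in(0,1)$ with $\mu(0)+\mu(1)=1$, and a symmetric $2\times2$ matrix $(q(a,b))$ with $q(0,1)=q(1,0)$ and $0<q(a,b)<1$. On a probability space, $\{A,A_\ell(u):\ell,u\ge1\}$ are i.i.d. $\{0,1\}$-valued with $\mathbb{P}[A=1]=\mu(1)$, independent of i.i.d. uniform$(0,1)$ variables $\{U(u,v):1\le u<v\}$, $U(v,u)=U(u,v)$. With $\mathbf A_L(u)=(A_1(u),\dots,A_L(u))$ and $Q_L(\mathbf a,\mathbf b)=\prod_{\ell=1}^Lq(a_\ell,b_\ell)$, the graph $\mathbb{M}(n;L)$ on $\{1,\dots,n\}$ has an edge between distinct $u,v$ iff $U(u,v)\le Q_L(\mathbf A_L(u),\mathbf A_L(v))$. Let $S_L(u)=A_1(u)+\dots+A_L(u)$. For $\ell\in\{0,\dots,L\}$, $I^{(\ell)}_n(L)$ denotes the number of nodes $u\in\{1,\dots,n\}$ that are isolated in $\mathbb{M}(n;L)$ and satisfy $S_L(u)=\ell$. $\Gamma(a)=\mathbb{E}[q(a,A)]$. A scaling $n\mapsto L_n$ of positive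 integers is $\rho$-admissible if $L_n\sim\rho\ln n$. *)

From HB Require Import structures.
From mathcomp Require Import all_boot all_order all_algebra.
From mathcomp Require Import all_classical all_reals all_analysis.
Set Implicit Arguments. Unset Strict Implicit. Unset Printing Implicit Defensive.
Import Order.TTheory GRing.Theory Num.Theory.
Local Open Scope classical_set_scope.
Local Open Scope ring_scope.

(* Attribute value 0 is [false], attribute value 1 is [true]. *)

Section MAG.
Variable R : realType.

Definition Gamma (mu : bool -> R) (q : bool -> bool -> R) (a : bool) : R :=
  q a false * mu false + q a true * mu true.

Variables (n L : nat).

(* An outcome of the attributes A_l(u), u in {1..n}, l in {1..L}. *)
Definition attr := {ffun 'I_n -> {ffun 'I_L -> bool}}.
(* An outcome of the edge indicators: e u v is meaningful only for u < v. *)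
Definition edges := {ffun 'I_n -> {ffun 'I_n -> bool}}.

Definition QL (q : bool -> bool -> R) (a b : {ffun 'I_L -> bool}) : R :=
  \prod_(l < L) q (a l) (b l).

Definition SL (a : {ffun 'I_L -> bool}) : nat := \sum_(l < L) (a l : nat).

Definition P_attr (mu : bool -> R) (A : attr) : R :=
  \prod_(u < n) \prod_(l < L) mu (A u l).

(* Conditional probability of an edge outcome given the attributes:
   for u < v the edge {u,v} is present iff U(u,v) <= Q_L(A(u),A(v)), an
   event of conditional probability Q_L(A(u),A(v)), independently over
   pairs; entries with ~~ (u < v) are forced to be false. *)
Definition P_edges (q : bool -> bool -> R) (A : attr) (e : edges) : R :=
  \prod_(u < n) \prod_(v < n)
    (if (u < v)%N then (if e u v then QL q (A u) (A v) else 1 - QL q (A u) (A v))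
     else (if e u v then 0 else 1)).

Definition adj (e : edges) (u v : 'I_n) : bool :=
  if (u < v)%N then e u v else if (v < u)%N then e v u else false.

Definition isolated (e : edges) (u : 'I_n) : bool := [forall v, ~~ adj e u v].

Definition I_count (l : nat) (A : attr) (e : edges) : nat :=
  #|[set u : 'I_n | isolated e u && (SL (A u) == l)]|.

Definition E_I (mu : bool -> R) (q : bool -> bool -> R) (l : nat) : R :=
  \sum_(A : attr) \sum_(e : edges) P_attr mu A * P_edges q A e * (I_count l A e)%:R.

End MAG.

Definition admissible (R : realType) (rho : R) (Ls : nat -> nat) : Prop :=
  (forall k, (0 < Ls k)%N) /\
  ((fun k => (Ls k)%:R / (rho * ln (k%:R : R))) @ \oo --> (1 : R^o)).

(* Summing out first the edges and then the attributes gives the exact formula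
   E[I^(0)_n(L)] = n mu(0)^L (1 - Gamma(0)^L)^(n-1): given the attributes, a node
   with attribute vector 0 is isolated with probability
   prod_(v <> u) (1 - Q_L(0, A(v))), whose factors are independent with mean
   1 - Gamma(0)^L.  Along a rho-admissible scaling, n x^(L_n) behaves like
   n^(1 + rho ln x).  If 1 + rho ln Gamma(0) < 0, then n Gamma(0)^(L_n) -> 0, so
   by Bernoulli's inequality the last factor stays above 1/2, while
   n mu(0)^(L_n) -> oo.  If 1 + rho ln Gamma(0) > 0, then n Gamma(0)^(L_n)
   eventually exceeds 4 ln n, and (1 - x)^m <= exp(-m x) bounds the mean by 1/n. *)

From Pilot Require Import Defs.
From HB Require Import structures.
From mathcomp Require Import all_boot all_order all_algebra.
From mathcomp Require Import all_classical all_reals all_analysis.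
From mathcomp Require Import ring lra.
Set Implicit Arguments. Unset Strict Implicit. Unset Printing Implicit Defensive.
Import numFieldNormedType.Exports.
Import Order.TTheory GRing.Theory Num.Theory.
Local Open Scope classical_set_scope.
Local Open Scope ring_scope.

Lemma natr_forall (R : comPzSemiRingType) (I : finType) (P : pred I) :
  [forall i, P i]%:R = \prod_i (P i)%:R :> R.
Proof.
have [/forallP allP | /forallPn [i Pi]] := boolP [forall i, P i].
  by rewrite big1 // => i _; rewrite allP.
by rewrite (bigD1 i) //= (negbTE Pi) mul0r.
Qed.

Lemma prod_pairs_incident (R : comPzSemiRingType) n (f : 'I_n -> 'I_n -> R)
    (w : 'I_n) :
  \prod_(u < n) \prod_(v < n)
     (if (u < v)%N && ((u == w) || (v == w)) then f u v else 1)
  = \prod_(v < n | v != w) (if (w < v)%N then f w v else f v w).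
Proof.
have splitE (u v : 'I_n) :
    (if (u < v)%N && ((u == w) || (v == w)) then f u v else 1) =
    (if u == w then (if (w < v)%N then f w v else 1) else 1) *
    (if v == w then (if (u < w)%N then f u w else 1) else 1).
  by case: (eqVneq u w) => [->|]; case: (eqVneq v w) => [->|] /=;
    rewrite ?ltnn ?mulr1 ?mul1r ?andbT ?andbF.
have rowE : \prod_(u < n) \prod_(v < n)
    (if u == w then (if (w < v)%N then f w v else 1) else 1)
    = \prod_(v < n) (if (w < v)%N then f w v else 1).
  rewrite (bigD1 w) //= eqxx [X in _ * X]big1 ?mulr1 //.
  by move=> u /negbTE ->; rewrite big1.
have colE : \prod_(u < n) \prod_(v < n)
    (if v == w then (if (u < w)%N then f u w else 1) else 1)
    = \prod_(v < n) (if (v < w)%N then f v w else 1).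
  rewrite exchange_big (bigD1 w) //= eqxx [X in _ * X]big1 ?mulr1 //.
  by move=> v /negbTE ->; rewrite big1.
under eq_bigr do rewrite (eq_bigr _ (fun v _ => splitE _ v)) big_split /=.
rewrite big_split /= rowE colE.
rewrite -big_split /= [RHS]big_mkcond /=; apply: eq_bigr => v _.
have [->|ne_vw] := eqVneq v w; first by rewrite ltnn mulr1.
case: (ltngtP w v) => [_|_|eq_wv]; rewrite ?mulr1 ?mul1r //.
by move/val_inj: eq_wv ne_vw => ->; rewrite eqxx.
Qed.

Section Edges.
Variables (R : realType) (n L : nat) (q : bool -> bool -> R).
Hypothesis q_sym : forall a b, q a b = q b a.

Lemma QL_sym (a b : {ffun 'I_L -> bool}) : QL q a b = QL q b a.
Proof. by apply: eq_bigr => l _; rewrite q_sym. Qed.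

Lemma isolated_indicatorE (e : edges n) (w : 'I_n) :
  (Defs.isolated e w)%:R = \prod_(u < n) \prod_(v < n)
    (if (u < v)%N && ((u == w) || (v == w)) then (~~ e u v)%:R else 1) :> R.
Proof.
rewrite prod_pairs_incident natr_forall [RHS]big_mkcond /=.
apply: eq_bigr => v _; rewrite /adj.
have [->|ne_vw] := eqVneq v w; first by rewrite ltnn.
by case: (ltngtP w v) => // /val_inj eq_wv; rewrite eq_wv eqxx in ne_vw.
Qed.

(* Summing out the edges pair by pair: a pair [u < v] through [w] contributes
   the probability [1 - Q_L] of being absent, every other pair contributes [1]. *)
Lemma sum_P_edges_isolated (A : attr n L) (w : 'I_n) :
  \sum_(e : edges n) P_edges q A e * (Defs.isolated e w)%:R
  = \prod_(v < n | v != w) (1 - QL q (A w) (A v)).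
Proof.
pose Q u v := QL q (A u) (A v).
pose g (u v : 'I_n) (b : bool) : R :=
  if (u < v)%N then (if b then Q u v else 1 - Q u v) else (if b then 0 else 1).
pose h (u v : 'I_n) (b : bool) : R :=
  if (u < v)%N && ((u == w) || (v == w)) then (~~ b)%:R else 1.
transitivity (\sum_(e : edges n)
    \prod_(u < n) \prod_(v < n) (g u v (e u v) * h u v (e u v))).
  apply: eq_bigr => e _; rewrite isolated_indicatorE -big_split /=.
  by apply: eq_bigr => u _; rewrite -big_split.
rewrite -(bigA_distr_bigA (fun u (r : {ffun 'I_n -> bool}) =>
  \prod_(v < n) (g u v (r v) * h u v (r v)))) /=.
under eq_bigr => u _ do rewrite -(bigA_distr_bigA (fun v b => g u v b * h u v b)) /=.
rewrite [RHS](eq_bigr (fun v : 'I_n => if (w < v)%N then 1 - Q w v else 1 - Q v w));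
  last by move=> v _; case: ifP => _; rewrite /Q // QL_sym.
rewrite -(prod_pairs_incident (fun u v => 1 - Q u v)).
apply: eq_bigr => u _; apply: eq_bigr => v _; rewrite big_bool /g /h.
by case: (u < v)%N; case: (_ || _); rewrite /= ?mulr1 ?mulr0 ?mul0r ?add0r ?addr0
  // addrC subrK.
Qed.

End Edges.

Lemma sum_ffun_prod_const (R : comPzSemiRingType) (T : finType) (L : nat)
    (f : T -> R) :
  \sum_(a : {ffun 'I_L -> T}) \prod_(l < L) f (a l) = (\sum_t f t) ^+ L.
Proof.
by rewrite -(bigA_distr_bigA (fun _ t => f t)) /= prodr_const card_ord.
Qed.

Lemma SL_eq0 (L : nat) (a : {ffun 'I_L -> bool}) :
  (SL a == 0)%N = (a == [ffun => false]).
Proof.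
rewrite /SL sum_nat_eq0; apply/forallP/eqP => [a0|-> l]; last by rewrite ffunE.
by apply/ffunP => l; rewrite ffunE; move: (a0 l); case: (a l).
Qed.

Section Attributes.
Variables (R : realType) (n L : nat) (mu : bool -> R) (q : bool -> bool -> R).
Hypothesis mu_sum1 : mu false + mu true = 1.

Lemma sum_attr_isolated (w : 'I_n) :
  \sum_(A : attr n L) P_attr mu A * (SL (A w) == 0)%N%:R *
      \prod_(v < n | v != w) (1 - QL q (A w) (A v))
  = mu false ^+ L * (1 - Gamma mu q false ^+ L) ^+ n.-1.
Proof.
pose z : {ffun 'I_L -> bool} := [ffun => false].
pose F (u : 'I_n) (a : {ffun 'I_L -> bool}) : R :=
  (\prod_(l < L) mu (a l)) * (if u == w then (a == z)%:R else 1 - QL q z a).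
transitivity (\sum_(A : attr n L) \prod_(u < n) F u (A u)).
  apply: eq_bigr => A _; rewrite big_split /= -mulrA SL_eq0; congr (_ * _).
  rewrite [RHS](bigD1 w) //= eqxx.
  under [in RHS]eq_bigr => u /negbTE -> do [].
  by have [->|] := eqVneq (A w) z; rewrite ?mul0r ?mul1r.
rewrite -(bigA_distr_bigA F) (bigD1 w) //=.
have sum_at_w : \sum_a F w a = mu false ^+ L.
  rewrite /F eqxx (bigD1 z) //= eqxx mulr1 [X in _ + X]big1 ?addr0.
    by under eq_bigr do rewrite /z ffunE; rewrite prodr_const card_ord.
  by move=> a /negbTE ->; rewrite mulr0.
have sum_off_w u : u != w -> \sum_a F u a = 1 - Gamma mu q false ^+ L.
  have QLz a : QL q z a = \prod_(l < L) q false (a l).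
    by apply: eq_bigr => l _; rewrite ffunE.
  move=> /negbTE uw; rewrite /F uw.
  under eq_bigr => a _ do rewrite QLz mulrBr mulr1 -big_split /=.
  rewrite sumrB sum_ffun_prod_const (sum_ffun_prod_const L (fun b => mu b * q false b)).
  by rewrite !big_bool /= addrC mu_sum1 expr1n /Gamma addrC !(mulrC (mu _)).
by rewrite sum_at_w (eq_bigr _ sum_off_w) prodr_const cardC1 card_ord.
Qed.

End Attributes.

Lemma I_countE (R : realType) n L l (A : attr n L) (e : edges n) :
  (I_count l A e)%:R = \sum_(u < n) (Defs.isolated e u)%:R * (SL (A u) == l)%:R :> R.
Proof.
rewrite /I_count -sum1_card natr_sum big_mkcond /=; apply: eq_bigr => u _.
rewrite unfold_in /in_set asboolb.
by case: (Defs.isolated e u); case: (SL (A u) == l); rewrite /= ?mulr1 ?mulr0.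
Qed.

Lemma E_I0E (R : realType) n L (mu : bool -> R) (q : bool -> bool -> R) :
  (forall a b, q a b = q b a) -> mu false + mu true = 1 ->
  E_I n L mu q 0 = n%:R * (mu false ^+ L * (1 - Gamma mu q false ^+ L) ^+ n.-1).
Proof.
move=> q_sym mu_sum1; rewrite /E_I.
transitivity (\sum_(A : attr n L) \sum_(u < n) \sum_(e : edges n)
    P_attr mu A * (SL (A u) == 0)%N%:R * (P_edges q A e * (Defs.isolated e u)%:R)).
  apply: eq_bigr => A _; rewrite [RHS]exchange_big; apply: eq_bigr => e _ /=.
  by rewrite I_countE mulr_sumr; apply: eq_bigr => u _; ring.
rewrite exchange_big mulr_natl -[X in _ *+ X](card_ord n) -sumr_const.
apply: eq_bigr => u _.
rewrite -(sum_attr_isolated _ _ mu_sum1 u); apply: eq_bigr => A _.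
by rewrite -mulr_sumr sum_P_edges_isolated.
Qed.

Lemma Bernoulli_ineq (R : realFieldType) (x : R) (m : nat) :
  x <= 1 -> 1 - m%:R * x <= (1 - x) ^+ m.
Proof.
move=> x_le1; elim: m => [|m IHm]; first by rewrite mul0r subr0 expr0.
have x_sqr_ge0 : 0 <= m%:R * x ^+ 2 by rewrite mulr_ge0 ?ler0n ?sqr_ge0.
have : (1 - x) * (1 - m%:R * x) <= (1 - x) * (1 - x) ^+ m.
  by rewrite ler_wpM2l // subr_ge0.
by rewrite exprS -natr1; nra.
Qed.

Section ExpLn.
Variable R : realType.

Lemma exprn_1B_le_expR (x : R) (m : nat) :
  0 <= x <= 1 -> (1 - x) ^+ m <= expR (- (m%:R * x)).
Proof.
move=> /andP[x_ge0 x_le1]; rewrite -mulrN expRM_natl.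
rewrite lerXn2r ?nnegrE ?expR_ge0 ?subr_ge0 //.
by have := expR_ge1Dx (- x); lra.
Qed.

Lemma natr_mul_exprn_expR (k L : nat) (rho x : R) :
  (1 < k)%N -> rho != 0 -> 0 < x ->
  k%:R * x ^+ L = expR ((1 + rho * (L%:R / (rho * ln k%:R)) * ln x) * ln k%:R).
Proof.
move=> k_gt1 rho_neq0 x_gt0.
have ln_neq0 : ln (k%:R : R) != 0 by rewrite gt_eqF // ln_gt0 // ltr1n.
have expR_lnk : expR (ln k%:R) = k%:R :> R by rewrite lnK // posrE ltr0n ltnW.
have expR_Llnx : expR (L%:R * ln x) = x ^+ L by rewrite expRM_natl lnK.
rewrite -[in LHS]expR_lnk -expR_Llnx -expRD; congr expR.
by field; rewrite ln_neq0.
Qed.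

Lemma ln_natr_cvgy : (fun k : nat => ln (k%:R : R)) @ \oo --> +oo.
Proof.
apply/cvgryPge => A; near=> k.
have A_le : expR A <= k%:R by near: k; apply: nbhs_infty_ger.
by rewrite -(expRK A) ler_ln ?posrE ?expR_gt0 ?(lt_le_trans (expR_gt0 A)).
Unshelve. all: end_near.
Qed.

(* From [1 + t^2/2 <= expR t]. *)
Lemma expR_ge_linear (a c : R) : 0 < a -> \forall t \near +oo, c * t <= expR (a * t).
Proof.
move=> a_gt0; near=> t.
have t_ge0 : 0 <= t by near: t; apply: nbhs_pinfty_ge; rewrite num_real.
have t_ge : 2 * c / a ^+ 2 <= t by near: t; apply: nbhs_pinfty_ge; rewrite num_real.
have := expR_ge1Dxn 1 (mulr_ge0 (ltW a_gt0) t_ge0).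
have a2_gt0 : 0 < a ^+ 2 by rewrite exprn_gt0.
rewrite ler_pdivrMr // in t_ge.
rewrite (_ : 2`!%:R = 2 :> R) //.
have : 2 * c * t <= t * a ^+ 2 * t by rewrite ler_wpM2r.
by nra.
Unshelve. all: end_near.
Qed.

End ExpLn.

Arguments ln_natr_cvgy {R}.

Section AdmissibleScaling.
Variables (R : realType) (rho : R) (Ls : nat -> nat).
Hypothesis rho_gt0 : 0 < rho.
Hypothesis Ls_admissible : admissible rho Ls.

Lemma scaled_pow_expR (x : R) : 0 < x ->
  exists2 s : nat -> R, s @ \oo --> 1 + rho * ln x &
    \forall k \near \oo, k%:R * x ^+ Ls k = expR (s k * ln k%:R).
Proof.
move=> x_gt0; have [_ Ls_ratio] := Ls_admissible.
exists (fun k => 1 + rho * ((Ls k)%:R / (rho * ln k%:R)) * ln x).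
  have -> : 1 + rho * ln x = 1 + rho * 1 * ln x by rewrite mulr1.
  apply: cvgD; first exact: cvg_cst.
  by apply: cvgMr_tmp; apply: cvgMl_tmp.
near=> k; apply: natr_mul_exprn_expR; rewrite ?gt_eqF //.
by near: k; apply: nbhs_infty_gt.
Unshelve. all: end_near.
Qed.

Lemma scaled_pow_ge (x a : R) : 0 < x -> a < 1 + rho * ln x ->
  \forall k \near \oo, expR (a * ln k%:R) <= k%:R * x ^+ Ls k.
Proof.
move=> x_gt0 a_lt; have [s s_cvg powE] := scaled_pow_expR x_gt0.
near=> k; have -> : k%:R * x ^+ Ls k = expR (s k * ln k%:R) by near: k.
rewrite ler_expR ler_wpM2r ?ln_ge0 ?ler1n //; first by near: k; apply: nbhs_infty_gt.
by apply/ltW; near: k; exact: cvgr_gt s_cvg _ a_lt.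
Unshelve. all: end_near.
Qed.

Lemma scaled_pow_le (x b : R) : 0 < x -> 1 + rho * ln x < b ->
  \forall k \near \oo, k%:R * x ^+ Ls k <= expR (b * ln k%:R).
Proof.
move=> x_gt0 lt_b; have [s s_cvg powE] := scaled_pow_expR x_gt0.
near=> k; have -> : k%:R * x ^+ Ls k = expR (s k * ln k%:R) by near: k.
rewrite ler_expR ler_wpM2r ?ln_ge0 ?ler1n //; first by near: k; apply: nbhs_infty_gt.
by apply/ltW; near: k; exact: cvgr_lt s_cvg _ lt_b.
Unshelve. all: end_near.
Qed.

Lemma mean_isolated_cvgy (m G : R) : 0 < m -> 0 < G <= 1 ->
  0 < 1 + rho * ln m -> 1 + rho * ln G < 0 ->
  (fun k => k%:R * (m ^+ Ls k * (1 - G ^+ Ls k) ^+ k.-1)) @ \oo --> +oo.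
Proof.
move=> m_gt0 /andP[G_gt0 G_le1] m_exp G_exp.
pose a := (1 + rho * ln m) / 2; pose b := (1 + rho * ln G) / 2.
have a_gt0 : 0 < a by rewrite divr_gt0.
have Nb_gt0 : 0 < - b by rewrite /b; lra.
apply/cvgryPge => A; near=> k.
have lnk_ge1 : 1 <= ln (k%:R : R) by near: k; exact: cvgry_ge ln_natr_cvgy 1.
have lnk_ge : 2 * A <= ln (k%:R : R) by near: k; exact: cvgry_ge ln_natr_cvgy _.
have mL_ge : expR (a * ln k%:R) <= k%:R * m ^+ Ls k.
  by near: k; apply: (scaled_pow_ge m_gt0); rewrite /a; lra.
have GL_le : k%:R * G ^+ Ls k <= expR (b * ln k%:R).
  by near: k; apply: (scaled_pow_le G_gt0); rewrite /b; lra.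
have lnk_le : 1 * ln k%:R <= expR (a * ln k%:R).
  by near: k; exact: ln_natr_cvgy (expR_ge_linear 1 a_gt0).
have lnk_le_Nb : 2 * ln k%:R <= expR (- b * ln k%:R).
  by near: k; exact: ln_natr_cvgy (expR_ge_linear 2 Nb_gt0).
have GL_ge0 : 0 <= G ^+ Ls k := exprn_ge0 _ (ltW G_gt0).
have GL_le1 : G ^+ Ls k <= 1 := exprn_ile1 _ (ltW G_gt0) G_le1.
have kGL_le : k%:R * G ^+ Ls k <= 1 / 2.
  have := expRxMexpNx_1 (b * ln k%:R); have := expR_gt0 (b * ln k%:R).
  by rewrite -mulNr; nra.
have P_ge : 1 / 2 <= (1 - G ^+ Ls k) ^+ k.-1.
  apply: le_trans (Bernoulli_ineq _ GL_le1).
  have : (k.-1)%:R * G ^+ Ls k <= k%:R * G ^+ Ls k.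
    by rewrite ler_wpM2r // ler_nat leq_pred.
  lra.
have mL_ge0 : 0 <= k%:R * m ^+ Ls k by rewrite mulr_ge0 // exprn_ge0 // ltW.
rewrite mulrA; nra.
Unshelve. all: end_near.
Qed.

Lemma mean_isolated_cvg0 (m G : R) : 0 <= m <= 1 -> 0 < G <= 1 ->
  0 < 1 + rho * ln G ->
  (fun k => k%:R * (m ^+ Ls k * (1 - G ^+ Ls k) ^+ k.-1)) @ \oo --> (0 : R^o).
Proof.
move=> /andP[m_ge0 m_le1] /andP[G_gt0 G_le1] G_exp.
pose a := (1 + rho * ln G) / 2.
have a_gt0 : 0 < a by rewrite divr_gt0.
apply: (squeeze_cvgr (f := fun=> 0) (h := fun k => expR (- ln k%:R)));
  [|exact: cvg_cst|exact: cvg_comp _ _ ln_natr_cvgy (@cvgr_expR R)].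
near=> k.
have k_ge2 : (2 <= k)%N by near: k; exact: nbhs_infty_ge.
have GL_ge : expR (a * ln k%:R) <= k%:R * G ^+ Ls k.
  by near: k; apply: (scaled_pow_ge G_gt0); rewrite /a; lra.
have lnk_le : 4 * ln k%:R <= expR (a * ln k%:R).
  by near: k; exact: ln_natr_cvgy (expR_ge_linear 4 a_gt0).
have GL_ge0 : 0 <= G ^+ Ls k := exprn_ge0 _ (ltW G_gt0).
have GL_le1 : G ^+ Ls k <= 1 := exprn_ile1 _ (ltW G_gt0) G_le1.
have k_gt0 : (0 : R) < k%:R by rewrite ltr0n (leq_trans _ k_ge2).
have half_le : k%:R / 2 <= (k.-1)%:R :> R.
  have : (k.-1)%:R = k%:R - 1 :> R.
    by rewrite -[in RHS](prednK (ltnW k_ge2)) -natr1 addrK.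
  have : 2 <= k%:R :> R by rewrite ler_nat.
  lra.
have P_le : (1 - G ^+ Ls k) ^+ k.-1 <= expR (- (2 * ln k%:R)).
  apply: le_trans (exprn_1B_le_expR _ _) _; first by rewrite GL_ge0.
  rewrite ler_expR lerN2.
  have : k%:R / 2 * G ^+ Ls k <= (k.-1)%:R * G ^+ Ls k by rewrite ler_wpM2r.
  lra.
have P_ge0 : 0 <= (1 - G ^+ Ls k) ^+ k.-1 by rewrite exprn_ge0 // subr_ge0.
have mL_le1 : m ^+ Ls k <= 1 := exprn_ile1 _ m_ge0 m_le1.
have mL_ge0 : 0 <= m ^+ Ls k := exprn_ge0 _ m_ge0.
have expR_lnk : expR (ln k%:R) = k%:R :> R by rewrite lnK // posrE.
have expR_split : k%:R * expR (- (2 * ln k%:R)) = expR (- ln k%:R) :> R.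
  by rewrite -{1}expR_lnk -expRD; congr expR; lra.
rewrite mulr_ge0 ?mulr_ge0 ?ler0n //= -expR_split ler_wpM2l ?ler0n //.
by rewrite (le_trans _ P_le) // ler_piMl.
Unshelve. all: end_near.
Qed.

End AdmissibleScaling.

Theorem proposition2 (R : realType) (mu : bool -> R) (q : bool -> bool -> R)
  (rho : R) (Ls : nat -> nat) :
  0 < mu false < 1 -> 0 < mu true < 1 -> mu false + mu true = 1 ->
  (forall a b, q a b = q b a) -> (forall a b, 0 < q a b < 1) ->
  0 < rho ->
  Gamma mu q false < Gamma mu q true ->
  0 < 1 + rho * ln (mu false) ->
  admissible rho Ls ->
  (1 + rho * ln (Gamma mu q false) < 0 ->
     (fun k => E_I k (Ls k) mu q 0) @ \oo --> +oo) /\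
  (0 < 1 + rho * ln (Gamma mu q false) ->
     (fun k => E_I k (Ls k) mu q 0) @ \oo --> (0 : R^o)).
Proof.
move=> /andP[mu0_gt0 mu0_lt1] /andP[mu1_gt0 _] mu_sum1 q_sym q_bounds rho_gt0 _
  mu0_exp Ls_admissible.
have Gamma0_bounds : 0 < Gamma mu q false <= 1.
  have /andP[? ?] := q_bounds false false; have /andP[? ?] := q_bounds false true.
  by apply/andP; split; rewrite /Gamma; nra.
have -> : (fun k => E_I k (Ls k) mu q 0) = (fun k => k%:R *
    (mu false ^+ Ls k * (1 - Gamma mu q false ^+ Ls k) ^+ k.-1)).
  by apply/funext => k; rewrite E_I0E.
split => Gamma0_exp.
- exact (mean_isolated_cvgy rho_gt0 Ls_admissible mu0_gt0 Gamma0_bounds mu0_exp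
    Gamma0_exp).
- have mu0_bounds : 0 <= mu false <= 1 by rewrite (ltW mu0_gt0) (ltW mu0_lt1).
  exact (mean_isolated_cvg0 rho_gt0 Ls_admissible mu0_bounds Gamma0_bounds Gamma0_exp).
Qed.
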